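(* Let a WIFS satisfy the $\Phi$-FNC for an iteration rule $\Phi$, with transition graph $\mathcal G$. Suppose every vertex of every non-essential loop class of $\mathcal G$ is a neighbour set of cardinality one. Then $\mathcal G$ is decomposable.
   Context: Setting. A weighted iterated function system (WIFS) $(S_i,p_i)_{i\in\mathcal I}$ consists of a finite index set $\mathcal I$, maps $S_i(x)=r_ix+d_i$ on $\mathbb R$ with $0<|r_i|<1$, and probabilities $p_i>0$ with $\sum_i p_i=1$. Its self-similar set $K$ is the unique nonempty compact set with $K=\bigcup_i S_i(K)$ and its self-similar measure $\mu$ is the unique Borel probability measure with $\mu(E)=\sum_i p_i\,\mu(S_i^{-1}(E))$. Standing assumptions: $K$ is not a singleton and its convex hull is $[0,1]$. For a finite word $\sigma=\sigma_1\cdots\sigma_n$ over $\mathcal I$ (the set of all finite words, including the empty word, is $\mathcal I^*$) put $S_\sigma=S_{\sigma_1}\circ\cdots\circ S_{\sigma_n}$, $p_\sigma=p_{\sigma_1}\cdots p_{\sigma_n}$ (identity and $1$ for the empty word). For a map $f$, $f\mu:=\mu\circ f^{-1}$. Iteration rules and net intervals. Fix a total order on the affine bijections $x\mapsto ax+b$ ($a\ne0$) of $\mathbb R$. For a closed interval $J$ let $T_J(x)=rx+c$ ($r>0$) be the map with $T_J([0,1])=J$. An iteration rule $\Phi$ assigns to each finite strictly increasing tuple $v=(f_1,\dots,f_m)$ of such maps a tuple $\Phi(v)=(\mathcal C_1,\dots,\mathcal C_m)$ of finite subsets of $\mathcal I^*$ such that for each $i$ and all large $n$ every word of length $n$ has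 a unique prefix in $\mathcal C_i$. Children of a pair $(\Delta,v)$, $\Delta=[a,b]$: let $\mathcal Y=\{T_\Delta\circ f_i\circ S_\tau:1\le i\le m,\tau\in\mathcal C_i\}$ and list $\{a,b\}\cup\{g(z):g\in\mathcal Y,z\in\{0,1\},g(z)\in\Delta\}$ as $a=y_1<\dots<y_{k+1}=b$; the children are the pairs $(\Delta',v')$ with $\Delta'=[y_j,y_{j+1}]$, $(y_j,y_{j+1})\cap K\ne\emptyset$, and $v'$ the increasing tuple of the distinct maps $T_{\Delta'}^{-1}\circ g$, $g\in\mathcal Y$, $g(K)\cap(y_j,y_{j+1})\ne\emptyset$. Let $\mathcal N_0=\{([0,1],(\mathrm{id}))\}$ and $\mathcal N_{n+1}$ the set of children of members of $\mathcal N_n$; second components are neighbour sets. $\Phi$ must also satisfy: (i) $\max\{r\,\mathrm{diam}\Delta:(\Delta,v)\in\mathcal N_n,(x\mapsto rx+c)\in v\}\to0$; (ii) if $f_1\neq f_2$ lie in a neighbour set then $f_1\circ S_\sigma\ne f_2$ for all $\sigma\in\mathcal I^*$. (Convention: a pair whose only child has the same interval is replaced by that child.) Transition graph. Children and their data depend only on $v$. The transition graph $\mathcal G$ has as vertices the neighbour sets occurring, root $v_{\mathrm{root}}=(\mathrm{id})$, and one edge $e$ from $v$ to $v'$ for each child $(\Delta',v')$ of a pair $(\Delta,v)$ (distinguished by the relative position of $\Delta'$ in $\Delta$), with transition matrix $T(e)$: for $v=(f_1,\dots,f_m)$, $v'=(g_1,\dots,g_n)$, $\Phi(v)=(\mathcal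 C_1,\dots,\mathcal C_m)$, $T(e)$ is the $m\times n$ matrix with $T(e)_{i,j}=\frac{f_i\mu((0,1))}{g_j\mu((0,1))}\sum p_\omega$ over $\omega\in\mathcal C_i$ with $T_\Delta\circ f_i\circ S_\omega=T_{\Delta'}\circ g_j$. For a path $\eta=(e_1,\dots,e_n)$, $T(\eta)=T(e_1)\cdots T(e_n)$ and $\|A\|$ = sum of entries. $\Omega^*$ is the set of finite paths starting at $v_{\mathrm{root}}$. The WIFS satisfies the $\Phi$-FNC if $\mathcal G$ is finite. A loop class is an induced subgraph $\mathcal L$ of $\mathcal G$ that is strongly connected, has at least one edge, and is maximal with these properties; it is essential if every vertex reachable by a directed path from a vertex of $\mathcal L$ lies in $\mathcal L$. Decomposability. A path with vertices $v_0,\dots,v_n$ is a transition path if $v_0$ lies in a loop class $\mathcal L_j$, $v_n$ in a loop class $\mathcal L_k$ with $k\ne j$, and $v_1,\dots,v_{n-1}$ lie in no loop class; it is an initial path if instead $v_0=v_{\mathrm{root}}$. Order the loop classes $\mathcal L_1,\dots,\mathcal L_m$ so that transition paths only go from $\mathcal L_i$ to $\mathcal L_j$ with $i<j$. Every $\eta\in\Omega^*$ is uniquely written $\eta=\phi\lambda_1\psi_1\cdots\psi_{m-1}\lambda_m$ with $\phi$ an initial path, $\lambda_i$ a path in $\mathcal L_i$, $\psi_i$ transition paths (all possibly empty); $\|T(\lambda_i)\|:=1$ for empty $\lambda_i$. $\mathcal G$ is decomposable if there is $C\ge1$, depending only on $\mathcal G$, with $C^{-1}\prod_i\|T(\lambda_i)\|\le\|T(\eta)\|\le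 C\prod_i\|T(\lambda_i)\|$ for all $\eta\in\Omega^*$. *)

From HB Require Import structures.
From mathcomp Require Import all_boot all_order all_algebra.
From mathcomp Require Import all_classical all_reals all_analysis.
Set Implicit Arguments. Unset Strict Implicit. Unset Printing Implicit Defensive.
Import Order.TTheory GRing.Theory Num.Theory.
Import numFieldNormedType.Exports.
Local Open Scope classical_set_scope.
Local Open Scope ring_scope.

Section WIFSDefs.
Variable R : realType.

(** Affine maps x |-> a x + b are represented by the pair (a, b). *)
Definition amap := (R * R)%type.
Definition app (f : amap) (x : R) : R := f.1 * x + f.2.
Definition comp (f g : amap) : amap := (f.1 * g.1, f.1 * g.2 + f.2).
Definition idm : amap := (1, 0).
Definition inva (f : amap) : amap := (f.1^-1, - (f.2 / f.1)).

(** Closed intervals [a, b] are represented by (a, b). *)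
Definition intv := (R * R)%type.
Definition TJ (J : intv) : amap := (J.2 - J.1, J.1).
(** Neighbour sets: increasing tuples of affine maps. *)
Definition nbset := seq amap.
Definition npair := (intv * nbset)%type.
Definition oitv (c d : R) : set R := [set x | c < x < d].

Definition convex_set (C : set R) :=
  forall x y t, C x -> C y -> 0 <= t <= 1 -> C (t * x + (1 - t) * y).
Definition convex_hull (A : set R) : set R :=
  [set x | forall C, convex_set C -> A `<=` C -> C x].

Definition strict_total_order (ltm : rel amap) :=
  [/\ (forall f, f.1 != 0 -> ~~ ltm f f),
      (forall f g h, f.1 != 0 -> g.1 != 0 -> h.1 != 0 ->
          ltm f g -> ltm g h -> ltm f h) &
      (forall f g, f.1 != 0 -> g.1 != 0 -> f != g -> ltm f g || ltm g f)].

Definition inc_tuple (ltm : rel amap) (v : nbset) :=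
  sorted ltm v && all (fun f => f.1 != 0) v.

Definition to_nbset (ltm : rel amap) (s : seq amap) : nbset :=
  sort (fun f g => (f == g) || ltm f g) (undup s).

Variable I : finType.

Definition Sw (S : I -> amap) (w : seq I) : amap :=
  foldr (fun i acc => comp (S i) acc) idm w.
Definition pw (p : I -> R) (w : seq I) : R := \prod_(i <- w) p i.

Definition is_wifs (S : I -> amap) (p : I -> R) :=
  [/\ forall i, 0 < `|(S i).1| < 1, forall i, 0 < p i & \sum_i p i = 1].

Definition is_ss_set (S : I -> amap) (K : set R) :=
  [/\ K !=set0, compact K & K = \bigcup_(i in setT) (app (S i) @` K)].

Definition is_ss_measure (S : I -> amap) (p : I -> R) (mu : probability R R) :=
  forall E, measurable E ->
    mu E = (\sum_(i : I) ((p i)%:E * mu (app (S i) @^-1` E)))%E.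

Definition prefix_code (C : seq (seq I)) :=
  exists N, forall n, (N <= n)%N -> forall w : seq I, size w = n ->
    exists! t, t \in C /\ prefix t w.

Variables (S : I -> amap) (K : set R) (ltm : rel amap)
  (Phi : nbset -> seq (seq (seq I))).

Definition Ymaps (q : npair) : seq amap :=
  flatten [seq [seq comp (TJ q.1) (comp fC.1 (Sw S t)) | t <- fC.2]
          | fC <- zip q.2 (Phi q.2)].

Definition ypts (q : npair) : seq R :=
  sort <=%R (undup (q.1.1 :: q.1.2 ::
    [seq z <- flatten [seq [:: app g 0; app g 1] | g <- Ymaps q]
       | q.1.1 <= z <= q.1.2])).

(** Children of a pair (Delta, v), before applying the replacement convention. *)
Definition raw_children (q : npair) : seq npair :=
  [seq (cd, to_nbset ltm [seq comp (inva (TJ cd)) g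
                         | g <- Ymaps q & `[< (app g @` K) `&` oitv cd.1 cd.2 !=set0 >]])
  | cd <- zip (ypts q) (behead (ypts q)) & `[< K `&` oitv cd.1 cd.2 !=set0 >]].

Definition trivial_pair (q : npair) :=
  exists q1, raw_children q = [:: q1] /\ q1.1 = q.1.

(** Replacement convention: [rchain q c] holds when c = q :: q1 :: ... :: qk
    where each pair is the only child (with the same interval) of the previous
    one and qk is not trivial; qk is the pair that replaces q. *)
Inductive rchain : npair -> seq npair -> Prop :=
| rc_stop q : ~ trivial_pair q -> rchain q [:: q]
| rc_step q q1 c : raw_children q = [:: q1] -> q1.1 = q.1 ->
    rchain q1 c -> rchain q (q :: c).

Definition child (q q' : npair) :=
  exists q0 c, [/\ q0 \in raw_children q, rchain q0 c & last q0 c = q'].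

Definition root_nb : nbset := [:: idm].
Definition root_pair : npair := ((0, 1), root_nb).

Inductive Nn : nat -> npair -> Prop :=
| N0 : Nn 0 root_pair
| NS n q q' : Nn n q -> child q q' -> Nn n.+1 q'.

Definition iteration_rule :=
  [/\ (forall v, inc_tuple ltm v ->
         [/\ size (Phi v) = size v,
             forall C, C \in Phi v -> uniq C &
             forall C, C \in Phi v -> prefix_code C]),
      (forall eps : R, 0 < eps -> exists n0, forall n q, (n0 <= n)%N -> Nn n q ->
          forall f, f \in q.2 -> `|f.1| * (q.1.2 - q.1.1) <= eps) &
      (forall n q, Nn n q -> forall f1 f2, f1 \in q.2 -> f2 \in q.2 -> f1 != f2 ->
          forall s : seq I, comp f1 (Sw S s) != f2)].

(** Matrices are represented by their entry functions (0-based indices). *)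
Definition mxm (n : nat) (A B : nat -> nat -> R) : nat -> nat -> R :=
  fun i k => \sum_(j < n) A i j * B j k.
Definition mx1 : nat -> nat -> R := fun i j => (i == j)%:R.
Definition mxnorm (m n : nat) (A : nat -> nat -> R) : R :=
  \sum_(i < m) \sum_(j < n) A i j.

Variables (p : I -> R) (mu : probability R R).

Definition muval (f : amap) : R := fine (mu (app f @^-1` oitv 0 1)).

Definition Tmx (q q' : npair) : nat -> nat -> R := fun i j =>
  let f := nth idm q.2 i in let g := nth idm q'.2 j in
  muval f / muval g *
  \sum_(w <- nth [::] (Phi q.2) i |
          comp (TJ q.1) (comp f (Sw S w)) == comp (TJ q'.1) g) pw p w.

Fixpoint chain_mx (q : npair) (c : seq npair) : nat -> nat -> R :=
  match c with
  | [::] => mx1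
  | q1 :: c' => mxm (size q1.2) (Tmx q q1) (chain_mx q1 c')
  end.

Record edge := Edge { esrc : nbset; epos : intv; etgt : nbset;
                      emat : nat -> nat -> R }.

Definition relpos (D D' : intv) : intv :=
  (app (inva (TJ D)) D'.1, app (inva (TJ D)) D'.2).

Definition Vset : set nbset := [set v | exists n q, Nn n q /\ q.2 = v].

Definition Eset : set edge :=
  [set e | exists n q q0 c, [/\ Nn n q, q0 \in raw_children q, rchain q0 c &
       e = Edge q.2 (relpos q.1 q0.1) (last q0 c).2 (chain_mx q c)]].

Definition FNC := finite_set Vset /\ finite_set Eset.

Fixpoint gpath (v w : nbset) (es : seq edge) : Prop :=
  match es with
  | [::] => v = w
  | e :: es' => [/\ Eset e, esrc e = v & gpath (etgt e) w es']
  end.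

Definition reach (v w : nbset) := exists es, gpath v w es.

Definition gpath_in (L : set nbset) (v w : nbset) (es : seq edge) :=
  [/\ L v, gpath v w es & all (fun e => `[< L (etgt e) >]) es].

Definition strongly_connected (L : set nbset) :=
  forall v w, L v -> L w -> exists es, gpath_in L v w es.
Definition has_edge (L : set nbset) :=
  exists e, [/\ Eset e, L (esrc e) & L (etgt e)].

Definition loop_class (L : set nbset) :=
  [/\ L `<=` Vset, strongly_connected L, has_edge L &
      forall L', L `<=` L' -> L' `<=` Vset -> strongly_connected L' ->
                 has_edge L' -> L' = L].

Definition essential (L : set nbset) :=
  forall v w, L v -> reach v w -> L w.

Fixpoint Tpath (es : seq edge) : nat -> nat -> R :=
  match es with
  | [::] => mx1
  | e :: es' => mxm (size (etgt e)) (emat e) (Tpath es')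
  end.

Definition pnorm (es : seq edge) : R :=
  match es with
  | [::] => 1
  | e :: _ => mxnorm (size (esrc e)) (size (etgt (last e es))) (Tpath es)
  end.

Definition lam (L : set nbset) (es : seq edge) : seq edge :=
  [seq e <- es | `[< L (esrc e) /\ L (etgt e) >]].

Definition decomposable :=
  exists C : R, 1 <= C /\
    forall w es, gpath root_nb w es ->
      C^-1 * \big[*%R/1]_(L \in loop_class) pnorm (lam L es) <= pnorm es /\
      pnorm es <= C * \big[*%R/1]_(L \in loop_class) pnorm (lam L es).

End WIFSDefs.

(* Every edge of the transition graph carries a nonnegative matrix with
   positive column sums, because mu charges every open set meeting K; since
   the graph is finite, the sizes of neighbour sets, the entries and (from
   below) the column sums are bounded uniformly.  A path from the root first
   avoids the essential classes and then stays inside a single one.  In the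
   first part, edges within a loop class join neighbour sets of size one, so
   they contribute exactly their 1x1 entry both to ||T(eta)|| and to the
   product over loop classes; the remaining edges have pairwise distinct
   sources (returning to a source would put the edge on a cycle), so there
   are at most |V| of them, each changing the norm by a bounded factor.  The
   essential part contributes its own norm up to a bounded factor. *)

From Pilot Require Import Defs.
From HB Require Import structures.
From mathcomp Require Import all_boot all_order all_algebra.
From mathcomp Require Import all_classical all_reals all_analysis.
From mathcomp Require Import ring lra.
Import Order.TTheory GRing.Theory Num.Theory.
Import numFieldNormedType.Exports.
Local Open Scope classical_set_scope.
Local Open Scope ring_scope.
Set Implicit Arguments. Unset Strict Implicit. Unset Printing Implicit Defensive.

Lemma mem_zip_fst_snd (T1 T2 : eqType) (s : seq T1) (t : seq T2) c :
  c \in zip s t -> c.1 \in s /\ c.2 \in t.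
Proof.
case: s t => [|x0 s] [|y0 t] //.
move=> /(nthP (x0, y0)) [i ilt <-]; rewrite nth_zip_cond ilt /=.
by move: ilt; rewrite size_zip leq_min => /andP[i1 i2]; split; apply: mem_nth.
Qed.

Lemma sorted_uniq_strict (T : eqType) (r : rel T) (s : seq T) :
  sorted (fun x y => (x == y) || r x y) s -> uniq s -> sorted r s.
Proof.
case: s => [//|x s] /=; elim: s x => [//|y s IH] x /= /andP[/orP[/eqP xy|rxy] pys].
  by rewrite xy inE eqxx.
by move=> /andP[_ uys]; rewrite rxy IH.
Qed.

Lemma all_last (T : Type) (P : pred T) x l : all P (x :: l) -> P (last x l).
Proof. by elim: l x => [|y l IH] x /andP[// Px Pl]; exact: IH. Qed.

Section RealLemmas.
Variable R : realType.

Lemma expr_lt_eps (r e : R) : 0 <= r < 1 -> 0 < e -> exists n, r ^+ n < e.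
Proof.
move=> /andP[r0 r1] e0.
have hr : `|r| < 1 by rewrite ger0_norm.
have [N _ HN] := @cvgr0_norm_lt _ _ _ _ _ _ (cvg_expr hr) e e0.
by exists N; have := HN N (leqnn N); rewrite /= ger0_norm ?exprn_ge0.
Qed.

Lemma prod_cons_if (T : Type) (P : pred T) (f : T -> R) x l :
  \prod_(j <- x :: l | P j) f j = (if P x then f x else 1) * \prod_(j <- l | P j) f j.
Proof. by rewrite big_cons; case: (P x); rewrite ?mul1r. Qed.

Lemma finite_set_ub (T : Type) (A : set T) (g : T -> R) : finite_set A ->
  exists M, 0 <= M /\ forall a, A a -> g a <= M.
Proof.
move=> /(finite_image g) /finite_seqP [s hs].
exists (\sum_(x <- s) `|x|); split=> [|a Aa]; first by rewrite sumr_ge0.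
have : [set` s] (g a) by rewrite -hs; exists a.
move=> /perm_to_rem /(perm_big _) ->; rewrite big_cons.
by rewrite (le_trans (ler_norm _)) // lerDl sumr_ge0.
Qed.

End RealLemmas.

Section AffineMaps.
Variable R : realType.

Lemma app_comp (f g : amap R) x : app (Defs.comp f g) x = app f (app g x).
Proof. by rewrite /app /Defs.comp /=; ring. Qed.

Lemma app_idm x : app (idm R) x = x.
Proof. by rewrite /app /idm /= mul1r addr0. Qed.

Lemma app_inva_TJ (J : intv R) x : J.1 < J.2 ->
  app (inva (TJ J)) x = (x - J.1) / (J.2 - J.1).
Proof. by move=> lt; rewrite /app /inva /TJ /=; field; rewrite subr_eq0 gt_eqF. Qed.

Lemma comp_TJ_inva (J : intv R) g : J.1 < J.2 ->
  Defs.comp (TJ J) (Defs.comp (inva (TJ J)) g) = g.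
Proof.
move=> lt; case: g => a b; rewrite /Defs.comp /inva /TJ /=.
by congr pair; field; rewrite subr_eq0 gt_eqF.
Qed.

Lemma continuous_app (f : amap R) : continuous (app f).
Proof.
move=> x; apply: cvgD; last exact: cvg_cst.
by apply: cvgM; [exact: cvg_cst | exact: cvg_id].
Qed.

Lemma measurable_app_preimage (f : amap R) (E : set R) : measurable E ->
  measurable (app f @^-1` E).
Proof.
move=> mE; rewrite -(setTI (_ @^-1` _)).
exact: (measurable_realfun.continuous_measurable_fun (@continuous_app f)) mE.
Qed.

Lemma measurable_oitv (c d : R) : measurable (oitv c d).
Proof.
by rewrite (_ : oitv c d = `]c, d[%classic); [exact: measurable_itv | rewrite set_itvoo].
Qed.

End AffineMaps.

Section SelfSimilarMeasure.
Variables (R : realType) (I : finType) (S : I -> amap R) (p : I -> R)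
  (K : set R) (mu : probability R R).
Hypothesis Hw : is_wifs S p.
Hypothesis Hss : is_ss_set S K.
Hypothesis Hm : is_ss_measure S p mu.
Hypothesis Hch : convex_hull K = [set x | 0 <= x <= 1].

Lemma app_Sw_cat (u v : seq I) x :
  app (Sw S (u ++ v)) x = app (Sw S u) (app (Sw S v) x).
Proof. by elim: u => [|i u IH] /=; rewrite ?app_idm // !app_comp IH. Qed.

Lemma K_sub01 x : K x -> 0 <= x <= 1.
Proof.
move=> Kx; have : convex_hull K x by move=> C _; apply.
by rewrite Hch.
Qed.

Lemma K_app_S i x : K x -> K (app (S i) x).
Proof. by case: Hss => _ _ HK Kx; rewrite HK; exists i => //; exists x. Qed.

Lemma K_app_Sw w x : K x -> K (app (Sw S w) x).
Proof. by elim: w => [|i w IH] Kx /=; rewrite ?app_idm // app_comp; apply/K_app_S/IH. Qed.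

Lemma K_image_S y : K y -> exists i z, K z /\ y = app (S i) z.
Proof. by case: Hss => _ _ HK; rewrite {1}HK => -[i _ [z Kz <-]]; exists i, z. Qed.

Lemma Sw_neq0 w : (Sw S w).1 != 0.
Proof.
case: Hw => Hr _ _; elim: w => [|i w IH] /=; first exact: oner_neq0.
by rewrite mulf_neq0 // -normr_gt0; case/andP: (Hr i).
Qed.

Lemma contraction_bound : exists r : R, 0 <= r < 1 /\ forall i, `|(S i).1| <= r.
Proof.
case: Hw => Hr _ _.
suff [r [hr H]] : exists r : R, 0 <= r < 1 /\ forall i, i \in enum I -> `|(S i).1| <= r.
  by exists r; split=> // i; apply: H; rewrite mem_enum.
elim: (enum I) => [|i s [r [/andP[r0 r1] H]]]; first by exists 0; rewrite lexx ltr01.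
exists (Num.max r `|(S i).1|); split.
  by rewrite le_max r0 gt_max r1; case/andP: (Hr i).
move=> j; rewrite inE => /orP[/eqP->|js]; first by rewrite le_max lexx orbT.
by rewrite le_max H.
Qed.

Lemma K_address (r : R) : 0 <= r -> (forall i, `|(S i).1| <= r) -> forall n y, K y ->
  exists w z, [/\ size w = n, K z, y = app (Sw S w) z & `|(Sw S w).1| <= r ^+ n].
Proof.
move=> r0 Hr; elim=> [|n IH] y Ky.
  by exists [::], y; rewrite /= app_idm normr1 expr0.
have [i [z [Kz ->]]] := K_image_S Ky.
have [w [z' [<- Kz' -> Hn]]] := IH z Kz.
exists (i :: w), z'; split=> //=; first by rewrite app_comp.
by rewrite normrM exprS ler_pM.
Qed.

Lemma mu_preimage_S_eq0 i E : measurable E -> mu E = 0%E ->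
  mu (app (S i) @^-1` E) = 0%E.
Proof.
case: Hw => _ Hp _ mE h0; have := Hm mE; rewrite h0 => /esym/eqP.
rewrite seq_psume_eq0 => [/allP /(_ i (mem_index_enum i)) /=|j _]; last first.
  by apply: mule_ge0; [rewrite lee_fin ltW | exact: measure_ge0].
by rewrite mule_eq0 eqe (gt_eqF (Hp i)) => /eqP.
Qed.

Lemma mu_preimage_Sw_eq0 w E : measurable E -> mu E = 0%E ->
  mu (app (Sw S w) @^-1` E) = 0%E.
Proof.
elim: w E => [|i w IH] E mE h0 /=.
  by rewrite (_ : _ @^-1` E = E) // funeqE => x; rewrite /preimage /= app_idm.
rewrite (_ : _ @^-1` E = app (Sw S w) @^-1` (app (S i) @^-1` E)); last first.
  by rewrite funeqE => x; rewrite /preimage /= app_comp.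
by apply: IH; [exact: measurable_app_preimage | exact: mu_preimage_S_eq0].
Qed.

(* Pulling back along a contraction S_w with y = S_w(z) and |r_w| tiny blows
   the interval around y up to one containing (-M - 1, M + 1). *)
Lemma mu_box_eq0 y (d : R) (M : nat) : K y -> 0 < d ->
  mu (oitv (y - d) (y + d)) = 0%E -> mu (oitv (- M%:R - 1) (M%:R + 1)) = 0%E.
Proof.
move=> Ky d0 h0; have [r [/andP[r0 r1] Hr]] := contraction_bound.
have M2 : 0 < M%:R + 2 :> R by rewrite ltr_wpDl.
have [n hn] := expr_lt_eps (introT andP (conj r0 r1)) (divr_gt0 d0 M2).
have [w [z [_ Kz ey ha]]] := K_address r0 Hr n Ky.
apply/eqP; rewrite eq_le measure_ge0 andbT.
rewrite -(mu_preimage_Sw_eq0 w (measurable_oitv (y - d) (y + d)) h0).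
apply: le_measure; rewrite ?inE; first exact: measurable_oitv.
  exact: measurable_app_preimage (measurable_oitv _ _).
move=> t /= /andP[t1 t2]; have /andP[z0 z1] := K_sub01 Kz.
have htz : `|t - z| <= M%:R + 2 by rewrite ler_norml; apply/andP; split; lra.
have : `|app (Sw S w) t - y| < d.
  rewrite (_ : _ - y = (Sw S w).1 * (t - z)); last by rewrite ey /app; ring.
  rewrite normrM; apply: le_lt_trans (ler_pM (normr_ge0 _) (normr_ge0 _) ha htz) _.
  by rewrite -ltr_pdivlMr.
by rewrite ltr_norml => /andP[k1 k2]; apply/andP; split; lra.
Qed.

Lemma mu_nbhs_K_gt0 y (d : R) : K y -> 0 < d -> (0 < mu (oitv (y - d) (y + d)))%E.
Proof.
move=> Ky d0; rewrite lt0e measure_ge0 andbT; apply/negP => /eqP h0.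
have cover : [set: R] `<=` \bigcup_n oitv (- n%:R - 1) (n%:R + 1).
  move=> x _; exists (Num.Def.archi_bound `|x|) => //=.
  have := archi_boundP (normr_ge0 x); rewrite ltr_norml => /andP[a1 a2].
  by apply/andP; split; lra.
have := measure_sigma_subadditive mu (fun n => measurable_oitv _ _) measurableT cover.
rewrite eseries0 => [|n _ _]; last exact: mu_box_eq0 Ky d0 h0.
move=> h; have : (1 <= 0 :> \bar R)%E by rewrite -(probability_setT mu); exact: h.
by rewrite lee_fin ler10.
Qed.

Lemma muval_gt0 h : (exists y, K y /\ 0 < app h y < 1) -> 0 < muval mu h.
Proof.
move=> [y [Ky /andP[c0 c1]]].
set c := app h y in c0 c1; set m := Num.min c (1 - c).
have m0 : 0 < m by rewrite lt_min c0 subr_gt0 c1.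
have hp : 0 < `|h.1| + 1 by rewrite ltr_wpDl.
set d := m / (`|h.1| + 1).
have d0 : 0 < d by rewrite divr_gt0.
have hd : `|h.1| * d < m by rewrite /d mulrA ltr_pdivrMr // mulrDr mulr1 mulrC ltr_pwDr.
have sub : oitv (y - d) (y + d) `<=` app h @^-1` oitv 0 1.
  move=> t /= /andP[t1 t2].
  have : `|app h t - c| < m.
    rewrite (_ : _ - c = h.1 * (t - y)); last by rewrite /c /app; ring.
    rewrite normrM; apply: le_lt_trans hd; rewrite ler_wpM2l //.
    by apply: ltW; rewrite ltr_norml; apply/andP; split; lra.
  rewrite ltr_norml => /andP[a1 a2].
  have mc : m <= c by rewrite ge_min lexx.
  have mc' : m <= 1 - c by rewrite ge_min lexx orbT.
  by apply/andP; split; lra.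
have mh := measurable_app_preimage h (measurable_oitv 0 1).
rewrite /muval fine_gt0 // (lt_le_trans (mu_nbhs_K_gt0 Ky d0)) /=; last first.
  by apply: le_measure; rewrite ?inE //; exact: measurable_oitv.
by apply: le_lt_trans (probability_le1 _ mh) _; rewrite ltry.
Qed.

End SelfSimilarMeasure.

Section NetIntervals.
Variables (R : realType) (I : finType) (S : I -> amap R) (K : set R)
  (ltm : rel (amap R)) (Phi : nbset R -> seq (seq (seq I))).

Lemma mem_YmapsP (q : npair R) g : g \in Ymaps S Phi q ->
  exists i t, [/\ (i < size q.2)%N, (i < size (Phi q.2))%N, t \in nth [::] (Phi q.2) i &
    g = Defs.comp (TJ q.1) (Defs.comp (nth (idm R) q.2 i) (Sw S t))].
Proof.
move=> /flattenP [s /mapP [fC /(nthP (idm R, [::])) [i ilt <-] ->]] /mapP [t].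
rewrite !nth_zip_cond ilt /= => tin ->.
by move: ilt; rewrite size_zip leq_min => /andP[i1 i2]; exists i, t.
Qed.

Lemma mem_Ymaps (q : npair R) i t : (i < size q.2)%N -> (i < size (Phi q.2))%N ->
  t \in nth [::] (Phi q.2) i ->
  Defs.comp (TJ q.1) (Defs.comp (nth (idm R) q.2 i) (Sw S t)) \in Ymaps S Phi q.
Proof.
move=> i1 i2 tin; apply/flattenP.
have iz : (i < size (zip q.2 (Phi q.2)))%N by rewrite size_zip leq_min i1 i2.
exists [seq Defs.comp (TJ q.1) (Defs.comp (nth (idm R) q.2 i) (Sw S t0))
       | t0 <- nth [::] (Phi q.2) i]; last exact: map_f.
apply/mapP; exists (nth (idm R, [::]) (zip q.2 (Phi q.2)) i); first exact: mem_nth.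
by rewrite nth_zip_cond iz.
Qed.

Lemma mem_raw_childrenP (q q0 : npair R) : q0 \in raw_children S K ltm Phi q ->
  [/\ q0.2 = to_nbset ltm [seq Defs.comp (inva (TJ q0.1)) g | g <- Ymaps S Phi q &
        `[< (app g @` K) `&` oitv q0.1.1 q0.1.2 !=set0 >]],
      q0.1 \in zip (ypts S Phi q) (behead (ypts S Phi q)) &
      K `&` oitv q0.1.1 q0.1.2 !=set0].
Proof. by move=> /mapP [cd]; rewrite mem_filter => /andP[/asboolP hK cdin] ->. Qed.

Lemma mem_raw_child_nbsetP (q q0 : npair R) h :
  q0 \in raw_children S K ltm Phi q -> h \in q0.2 ->
  exists g, [/\ g \in Ymaps S Phi q, (app g @` K) `&` oitv q0.1.1 q0.1.2 !=set0 &
     h = Defs.comp (inva (TJ q0.1)) g].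
Proof.
move=> /mem_raw_childrenP [-> _ _]; rewrite /to_nbset mem_sort mem_undup.
by move=> /mapP [g]; rewrite mem_filter => /andP[/asboolP hg gin] ->; exists g.
Qed.

Lemma to_nbset_inc_tuple s : strict_total_order ltm ->
  all (fun f : amap R => f.1 != 0) s -> inc_tuple ltm (to_nbset ltm s).
Proof.
case=> _ _ tot alls; rewrite /inc_tuple /to_nbset all_sort all_undup alls andbT.
apply: sorted_uniq_strict; last by rewrite sort_uniq undup_uniq.
apply: (sort_sorted_in (P := fun f : amap R => f.1 != 0)); last by rewrite all_undup.
by move=> f g f0 g0; case: (eqVneq f g) => //= fg; apply: tot.
Qed.

Lemma mem_ypts (q : npair R) z : q.1.1 <= q.1.2 -> z \in ypts S Phi q ->
  q.1.1 <= z <= q.1.2.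
Proof.
move=> le; rewrite /ypts mem_sort mem_undup !inE mem_filter.
by case/or3P => [/eqP->|/eqP->|/andP[]//]; rewrite lexx le.
Qed.

(* An invariant of every pair (Delta, v) = q of N_n. *)
Definition good_pair (q : npair R) : Prop := [/\ q.1.1 < q.1.2, inc_tuple ltm q.2,
   (forall x, K x -> q.1.1 < x < q.1.2 ->
      exists2 h, h \in q.2 & exists2 y, K y & x = app (Defs.comp (TJ q.1) h) y),
   (exists x, K x /\ q.1.1 < x < q.1.2) &
   (forall h, h \in q.2 -> exists y, K y /\ 0 < app h y < 1)].

Variable p : I -> R.
Hypothesis Hw : is_wifs S p.
Hypothesis Hss : is_ss_set S K.
Hypothesis Hns : ~ exists x : R, K = [set x].
Hypothesis Hch : convex_hull K = [set x | 0 <= x <= 1].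
Hypothesis Hlt : strict_total_order ltm.
Hypothesis Hir : iteration_rule S K ltm Phi.

(* Otherwise K = {0, 1}, which no contraction S_i maps into itself. *)
Lemma K_inner_point : exists x, K x /\ 0 < x < 1.
Proof.
apply: contrapT => hn.
have K01 x : K x -> x = 0 \/ x = 1.
  move=> Kx; have /andP[x0 x1] := K_sub01 Hch Kx.
  case: (eqVneq x 0) => [->|xn0]; first by left.
  case: (eqVneq x 1) => [->|xn1]; first by right.
  exfalso; apply: hn; exists x; split => //.
  by rewrite !lt_neqAle eq_sym xn0 xn1 x0 x1.
have Kpair (a b : R) : K a -> (forall y, K y -> y = a \/ y = b) -> K b.
  move=> Ka Kab; apply: contrapT => nKb; apply: Hns; exists a.
  rewrite funeqE => y; apply/propext; split=> [/[dup] Ky /Kab [|yb]|->] //.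
  by rewrite yb in Ky.
case: Hss => [[x0 Kx0] _ _].
have K0 : K 0.
  case: (K01 _ Kx0) => [<- // | e1]; apply: (Kpair 1); first by rewrite -e1.
  by move=> y /K01 [] ->; [right | left].
have K1 : K 1 := Kpair 0 1 K0 K01.
case: Hw => Hr _ Hs.
have [i _] : exists i : I, true.
  apply: contrapT => nI; move: Hs; rewrite big1 => [/esym/eqP|i _]; last first.
    by exfalso; apply: nI; exists i.
  by rewrite oner_eq0.
have /andP[r0 r1] := Hr i.
move: r0 r1; have <- : app (S i) 1 - app (S i) 0 = (S i).1 by rewrite /app; ring.
case: (K01 _ (K_app_S Hss i K0)) => ->; case: (K01 _ (K_app_S Hss i K1)) => ->;
  by rewrite ?subrr ?normr0 ?ltxx //= ?subr0 ?normr1 ?ltxx // ?sub0r ?normrN ?normr1 ?ltxx.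
Qed.

Lemma good_root_pair : good_pair (root_pair R).
Proof.
split=> /=; [exact: ltr01 | by rewrite /inc_tuple /= oner_neq0 | | exact: K_inner_point |].
  move=> x Kx _; exists (idm R); first by rewrite inE.
  by exists x => //; rewrite /app /Defs.comp /TJ /idm /=; ring.
move=> h; rewrite inE => /eqP ->; have [x [Kx hx]] := K_inner_point.
by exists x; rewrite app_idm.
Qed.

Lemma raw_child_sub_interval q q0 : q.1.1 < q.1.2 -> q0 \in raw_children S K ltm Phi q ->
  [/\ q.1.1 <= q0.1.1, q0.1.1 < q0.1.2 & q0.1.2 <= q.1.2].
Proof.
move=> lt /mem_raw_childrenP [_ cdin [x0 [_ /andP[x1 x2]]]].
have [c1 c2] := mem_zip_fst_snd cdin.
have /andP[c1a _] := mem_ypts (ltW lt) c1.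
have /andP[_ c2b] := mem_ypts (ltW lt) (mem_behead c2).
by split=> //; apply: lt_trans x2.
Qed.

Lemma raw_child_inc_tuple q q0 : q.1.1 < q.1.2 -> inc_tuple ltm q.2 ->
  q0.1.1 < q0.1.2 -> q0 \in raw_children S K ltm Phi q -> inc_tuple ltm q0.2.
Proof.
move=> lt inc lt0 /mem_raw_childrenP [-> _ _]; apply: to_nbset_inc_tuple => //.
apply/allP => h /mapP [g]; rewrite mem_filter => /andP[_ gin] ->.
have [i [t [i1 i2 tin ->]]] := mem_YmapsP gin.
have fnz : (nth (idm R) q.2 i).1 != 0 by case/andP: inc => _ /allP; apply; apply: mem_nth.
have dnz (J : intv R) : J.1 < J.2 -> J.2 - J.1 != 0 by move=> J12; rewrite subr_eq0 gt_eqF.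
by rewrite /Defs.comp /inva /TJ /= !mulf_neq0 ?invr_eq0 ?dnz ?(Sw_neq0 Hw).
Qed.

(* A point x of K inside Delta' is T_Delta o f_i (S_w z) for words w of any
   length; a prefix tau of w lies in C_i, so x is in the image of
   T_Delta o f_i o S_tau, which becomes a neighbour of Delta'. *)
Lemma raw_child_cover q q0 : good_pair q -> q0 \in raw_children S K ltm Phi q ->
  forall x, K x -> q0.1.1 < x < q0.1.2 ->
  exists2 h, h \in q0.2 & exists2 y, K y & x = app (Defs.comp (TJ q0.1) h) y.
Proof.
move=> [lt inc cov _ _] q0in x Kx /andP[x1 x2].
have [eq2 _ _] := mem_raw_childrenP q0in.
have [c1a lt0 c2b] := raw_child_sub_interval lt q0in.
have xin : q.1.1 < x < q.1.2 by rewrite (le_lt_trans c1a x1) (lt_le_trans x2 c2b).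
have [h /(nthP (idm R)) [i ilt hi] [y Ky ex]] := cov x Kx xin.
case: Hir => Hi _ _; have [hsz _ hpc] := Hi _ inc.
have i2 : (i < size (Phi q.2))%N by rewrite hsz.
have [N HN] := hpc _ (mem_nth [::] i2).
have [r [/andP[r0 r1] Hr]] := contraction_bound Hw.
have [w [z [sw Kz ey _]]] := K_address Hss r0 Hr N Ky.
have [tau [[tauin /prefixP [w' ew]] _]] := HN N (leqnn N) w sw.
set g := Defs.comp (TJ q.1) (Defs.comp (nth (idm R) q.2 i) (Sw S tau)).
have Kz' : K (app (Sw S w') z) by exact: K_app_Sw.
have xe : x = app g (app (Sw S w') z) by rewrite ex ey ew app_Sw_cat /g !app_comp -hi.
exists (Defs.comp (inva (TJ q0.1)) g); last by exists (app (Sw S w') z); rewrite ?comp_TJ_inva.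
rewrite eq2 /to_nbset mem_sort mem_undup; apply/mapP; exists g => //.
rewrite mem_filter mem_Ymaps // andbT; apply/asboolP.
by exists x; split; [exists (app (Sw S w') z) | rewrite /oitv /= x1 x2].
Qed.

Lemma good_raw_child q q0 : good_pair q -> q0 \in raw_children S K ltm Phi q ->
  good_pair q0.
Proof.
move=> Gq q0in; have [lt inc _ _ _] := Gq.
have [_ _ [x0 [Kx0 hx0]]] := mem_raw_childrenP q0in.
have [_ lt0 _] := raw_child_sub_interval lt q0in.
split=> //.
- exact: (raw_child_inc_tuple lt inc lt0 q0in).
- exact: (raw_child_cover Gq q0in).
- by exists x0.
- move=> h /(mem_raw_child_nbsetP q0in) [g [gin [_ [[y Ky <-] /andP[y1 y2]]] ->]].
  exists y; split => //; rewrite app_comp app_inva_TJ // divr_gt0 ?subr_gt0 //=.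
  by rewrite ltr_pdivrMr ?subr_gt0 // mul1r ltrD2r.
Qed.

Lemma rchain_head q c : rchain S K ltm Phi q c -> exists c', c = q :: c'.
Proof. by case=> [q0 _|q0 q1 c0 _ _ _]; [exists [::] | exists c0]. Qed.

Lemma good_rchain_last q c : rchain S K ltm Phi q c -> good_pair q -> good_pair (last q c).
Proof.
elim=> [//|q0 q1 c0 rq1 _ rc IH] G0 /=.
have G1 : good_pair q1 by apply: (good_raw_child G0); rewrite rq1 inE.
by have [c' ec] := rchain_head rc; move: (IH G1); rewrite ec.
Qed.

Lemma good_Nn n q : Nn S K ltm Phi n q -> good_pair q.
Proof.
elim=> [|m q1 q2 _ G1 [q0 [c [q0in rc <-]]]]; first exact: good_root_pair.
exact/(good_rchain_last rc)/(good_raw_child G1).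
Qed.

Lemma good_size_gt0 q : good_pair q -> (0 < size q.2)%N.
Proof. by case=> _ _ cov [x [Kx /(cov x Kx) [h]]]; case: q.2. Qed.

End NetIntervals.

Section EntrywiseMatrices.
Variable R : realType.

Definition nonneg_mx (A : nat -> nat -> R) := forall i j, 0 <= A i j.
Definition colsum_pos m n (A : nat -> nat -> R) :=
  forall j, (j < n)%N -> 0 < \sum_(i < m) A i j.

Lemma ler_sum_entry n (x : nat -> R) k : (forall i, 0 <= x i) -> (k < n)%N ->
  x k <= \sum_(i < n) x i.
Proof. by move=> x0 kn; rewrite (bigD1 (Ordinal kn)) //= lerDl sumr_ge0. Qed.

Lemma ler_mxnorm_entry m n (A : nat -> nat -> R) i j : nonneg_mx A ->
  (i < m)%N -> (j < n)%N -> A i j <= mxnorm m n A.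
Proof.
move=> A0 im jn; apply: le_trans (ler_sum_entry (x := fun i => \sum_(j < n) A i j) _ im).
  exact: ler_sum_entry.
by move=> k; apply: sumr_ge0.
Qed.

Lemma mx1_ge0 : nonneg_mx (@mx1 R).
Proof. by move=> i j; rewrite /mx1 ler0n. Qed.

Lemma mxm_ge0 n A B : nonneg_mx A -> nonneg_mx B -> nonneg_mx (mxm n A B).
Proof. by move=> A0 B0 i k; apply: sumr_ge0 => j _; apply: mulr_ge0. Qed.

Lemma sumr_mul_gt0 n (a b : nat -> R) : (forall l, (l < n)%N -> 0 < a l) ->
  (forall l, 0 <= b l) -> 0 < \sum_(l < n) b l -> 0 < \sum_(l < n) a l * b l.
Proof.
move=> a0 b0 bpos.
have ab0 (l : 'I_n) : true -> 0 <= a l * b l.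
  by move=> _; exact: mulr_ge0 (ltW (a0 _ (ltn_ord l))) (b0 l).
rewrite lt_def sumr_ge0 // andbT; apply: contraTN bpos => /eqP /(psumr_eq0P ab0) abl.
rewrite big1 ?ltxx // => l _; have /eqP := abl l isT.
by rewrite mulf_eq0 gt_eqF ?a0 //= => /eqP.
Qed.

Lemma colsum_pos_mx1 n : colsum_pos n n (@mx1 R).
Proof.
move=> j jn; rewrite (bigD1 (Ordinal jn)) //= /mx1 eqxx ltr_pwDl ?ltr01 //.
by apply: sumr_ge0 => i _; exact: ler0n.
Qed.

Lemma colsum_pos_mxm m n k A B : nonneg_mx A -> nonneg_mx B ->
  colsum_pos m n A -> colsum_pos n k B -> colsum_pos m k (mxm n A B).
Proof.
move=> A0 B0 cA cB j jk; rewrite exchange_big /=.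
under eq_bigr do rewrite -mulr_suml.
apply: (sumr_mul_gt0 (a := fun l => \sum_(i < m) A i l) (b := B^~ j)); first exact: cA.
  by move=> l; exact: B0.
exact: cB.
Qed.

End EntrywiseMatrices.

Section TransitionMatrices.
Variables (R : realType) (I : finType) (S : I -> amap R) (p : I -> R)
  (K : set R) (mu : probability R R) (ltm : rel (amap R))
  (Phi : nbset R -> seq (seq (seq I))).
Hypothesis Hw : is_wifs S p.
Hypothesis Hss : is_ss_set S K.
Hypothesis Hm : is_ss_measure S p mu.
Hypothesis Hns : ~ exists x : R, K = [set x].
Hypothesis Hch : convex_hull K = [set x | 0 <= x <= 1].
Hypothesis Hlt : strict_total_order ltm.
Hypothesis Hir : iteration_rule S K ltm Phi.

Local Notation good_pair := (good_pair K ltm).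

Lemma pw_gt0 w : 0 < pw p w.
Proof. by case: Hw => _ Hp _; apply: prodr_gt0. Qed.

Lemma Tmx_ge0 q q' : nonneg_mx (Tmx S Phi p mu q q').
Proof.
move=> i j; rewrite mulr_ge0 ?divr_ge0 ?fine_ge0 ?measure_ge0 //.
by apply: sumr_ge0 => w _; exact/ltW/pw_gt0.
Qed.

Lemma chain_mx_ge0 q c : nonneg_mx (chain_mx S Phi p mu q c).
Proof.
elim: c q => [|q1 c IH] q /=; first exact: mx1_ge0.
by apply: mxm_ge0; [exact: Tmx_ge0 | exact: IH].
Qed.

(* Column j of a child is produced by some neighbour f_i of the parent and a
   word tau, which contributes the weight p_tau > 0; the normalising ratio is
   positive because mu charges every neighbourhood of a point of K. *)
Lemma Tmx_colsum_pos q q0 : good_pair q -> q0 \in raw_children S K ltm Phi q ->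
  colsum_pos (size q.2) (size q0.2) (Tmx S Phi p mu q q0).
Proof.
move=> Gq q0in j jlt.
have G0 := good_raw_child Hw Hss Hlt Hir Gq q0in.
have [g [gin _ eh]] := mem_raw_child_nbsetP q0in (mem_nth (idm R) jlt).
have [i [t [i1 i2 tin eg]]] := mem_YmapsP gin.
rewrite (bigD1 (Ordinal i1)) //= ltr_pwDl ?sumr_ge0 // => [|i' _]; last exact: Tmx_ge0.
case: Gq G0 => _ _ _ _ pos [lt0 _ _ _ pos0].
rewrite mulr_gt0 ?divr_gt0 ?(muval_gt0 Hw Hss Hm Hch) //; first exact/pos/mem_nth.
  exact/pos0/mem_nth.
rewrite (big_rem t tin) /= eh comp_TJ_inva // eg eqxx ltr_pwDl ?pw_gt0 //.
by apply: sumr_ge0 => w _; exact/ltW/pw_gt0.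
Qed.

Lemma chain_mx_colsum_pos q0 c : rchain S K ltm Phi q0 c -> forall q, good_pair q ->
  q0 \in raw_children S K ltm Phi q ->
  colsum_pos (size q.2) (size (last q0 c).2) (chain_mx S Phi p mu q c).
Proof.
elim=> [q1 _|q1 q2 c0 rq1 _ rc IH] q Gq q1in /=.
  apply: colsum_pos_mxm; [exact: Tmx_ge0 | exact: mx1_ge0 | | exact: colsum_pos_mx1].
  exact: Tmx_colsum_pos.
have G1 := good_raw_child Hw Hss Hlt Hir Gq q1in.
have [c' ec] := rchain_head rc.
rewrite (_ : last q1 c0 = last q2 c0) ?ec //.
apply: colsum_pos_mxm; [exact: Tmx_ge0 | exact: chain_mx_ge0 | exact: Tmx_colsum_pos |].
by rewrite -ec; apply: IH => //; rewrite rq1 inE.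
Qed.

Lemma Vset_root : Vset S K ltm Phi (root_nb R).
Proof. by exists 0%N, (root_pair R); split => //; exact: N0. Qed.

Lemma Eset_props e : Eset S K ltm Phi p mu e ->
  [/\ nonneg_mx (emat e), colsum_pos (size (esrc e)) (size (etgt e)) (emat e),
      (0 < size (etgt e))%N, Vset S K ltm Phi (esrc e) & Vset S K ltm Phi (etgt e)].
Proof.
move=> [n [q [q0 [c [Nq q0in rc ->]]]]] /=.
have Gq := good_Nn Hw Hss Hns Hch Hlt Hir Nq.
have G0 := good_raw_child Hw Hss Hlt Hir Gq q0in.
split; [exact: chain_mx_ge0 | exact: chain_mx_colsum_pos | | by exists n, q |].
  exact/good_size_gt0/(good_rchain_last Hw Hss Hlt Hir rc).
by exists n.+1, (last q0 c); split => //; apply: NS Nq _; exists q0, c.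
Qed.

End TransitionMatrices.

Section LoopClasses.
Variables (R : realType) (I : finType) (S : I -> amap R) (p : I -> R)
  (K : set R) (mu : probability R R) (ltm : rel (amap R))
  (Phi : nbset R -> seq (seq (seq I))).

Local Notation E := (Eset S K ltm Phi p mu).
Local Notation V := (Vset S K ltm Phi).
Local Notation gp := (gpath S K ltm Phi p mu).
Local Notation rch := (reach S K ltm Phi p mu).
Local Notation LC := (loop_class S K ltm Phi p mu).
Local Notation ess := (essential S K ltm Phi p mu).

Hypothesis EV : forall e, E e -> V (esrc e) /\ V (etgt e).

Lemma gpath_cat v u w es1 es2 : gp v u es1 -> gp u w es2 -> gp v w (es1 ++ es2).
Proof.
elim: es1 v => [|e es1 IH] v /=; first by move=> ->.
by move=> [Ee se h1] h2; split => //; apply: IH h1 h2.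
Qed.

Lemma reach_refl v : rch v v.
Proof. by exists [::]. Qed.

Lemma reach_trans u v w : rch u v -> rch v w -> rch u w.
Proof. by move=> [es1 h1] [es2 h2]; exists (es1 ++ es2); apply: gpath_cat h1 h2. Qed.

Lemma reach_edge e : E e -> rch (esrc e) (etgt e).
Proof. by move=> Ee; exists [:: e]. Qed.

Lemma reach_Vset v w : V v -> rch v w -> V w.
Proof.
move=> + [es]; elim: es v => [|e es IH] v Vv /=; first by move=> <-.
by move=> [Ee _ h]; apply: IH h; case: (EV Ee).
Qed.

Definition scc v := [set u | rch v u /\ rch u v].

Lemma gpath_in_scc v a b es : gp a b es -> rch v a -> rch b v ->
  all (fun e => `[< scc v (etgt e) >]) es.
Proof.
elim: es a => [|e es IH] a //= [Ee se h] va bv.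
have vt : rch v (etgt e) by apply: reach_trans va _; rewrite -se; apply: reach_edge.
rewrite (IH _ h vt bv) andbT; apply/asboolP; split => //.
by apply: reach_trans bv; exists es.
Qed.

Lemma scc_strongly_connected v : strongly_connected S K ltm Phi p mu (scc v).
Proof.
move=> u1 u2 [vu1 u1v] [vu2 u2v]; have [es1 h1] := u1v; have [es2 h2] := vu2.
exists (es1 ++ es2); split => //; first exact: gpath_cat h1 h2.
exact: gpath_in_scc (gpath_cat h1 h2) vu1 u2v.
Qed.

Lemma strongly_connected_sub_scc L v :
  strongly_connected S K ltm Phi p mu L -> L v -> L `<=` scc v.
Proof.
move=> sc Lv u Lu.
have [es1 [_ h1 _]] := sc _ _ Lv Lu; have [es2 [_ h2 _]] := sc _ _ Lu Lv.
by split; [exists es1 | exists es2].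
Qed.

Lemma loop_class_scc L v : LC L -> L v -> L = scc v.
Proof.
move=> [LV sc [e [Ee Ls Lt]] mx] Lv.
have sub := strongly_connected_sub_scc sc Lv.
apply/esym/mx => //; last by exists e; split => //; apply: sub.
- by move=> u [vu _]; apply: reach_Vset vu; apply: LV.
- exact: scc_strongly_connected.
Qed.

Lemma loop_class_eq L L' v : LC L -> LC L' -> L v -> L' v -> L = L'.
Proof.
by move=> LCL LCL' Lv L'v; rewrite (loop_class_scc LCL Lv) (loop_class_scc LCL' L'v).
Qed.

Lemma scc_loop_class e : E e -> rch (etgt e) (esrc e) -> LC (scc (esrc e)).
Proof.
move=> Ee ts; have [Vs _] := EV Ee.
split; [by move=> u [vu _]; apply: reach_Vset vu | exact: scc_strongly_connected | |].
  have srefl : scc (esrc e) (esrc e) by split; apply: reach_refl.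
  by exists e; split=> //; split=> //; apply: reach_edge.
move=> L' sub _ sc _; apply/seteqP; split=> //.
by apply: (strongly_connected_sub_scc sc (sub _ _)); split; apply: reach_refl.
Qed.

Definition internal e := exists L, [/\ LC L, L (esrc e) & L (etgt e)].

Lemma internal_of_back_reach e : E e -> rch (etgt e) (esrc e) -> internal e.
Proof.
move=> Ee ts; exists (scc (esrc e)); split; first exact: scc_loop_class.
  by split; apply: reach_refl.
by split=> //; apply: reach_edge.
Qed.

Lemma finite_loop_classes : finite_set V -> finite_set LC.
Proof.
move=> fV; apply: (sub_finite_set (B := scc @` V)); last exact: finite_image.
move=> L LCL; have [LV _ [e [Ee Ls _]] _] := LCL.
by exists (esrc e); [exact: LV | rewrite -(loop_class_scc LCL Ls)].
Qed.

Definition in_class (L : set (nbset R)) (e : edge R) := `[< L (esrc e) /\ L (etgt e) >].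

Lemma lam_cat L (a b : seq (edge R)) : lam L (a ++ b) = lam L a ++ lam L b.
Proof. exact: filter_cat. Qed.

Lemma lam_nil L l : all (fun e => ~~ in_class L e) l -> lam L l = [::].
Proof.
rewrite /lam /in_class; elim: l => [|e l IH] //= /andP[h /IH ->].
by rewrite (negbTE h).
Qed.

Lemma lam_id L l : all (in_class L) l -> lam L l = l.
Proof. by rewrite /lam /in_class; elim: l => [|e l IH] //= /andP[-> /IH ->]. Qed.

Definition in_essential_class x := exists L, [/\ LC L, ess L & L x].

Lemma gpath_split_essential v w es : gp v w es -> exists pre suf u,
  [/\ es = pre ++ suf, gp v u pre, gp u w suf,
      all (fun e => `[< ~ in_essential_class (esrc e) >]) pre &
      suf = [::] \/ in_essential_class u].
Proof.
elim: es v => [|e es IH] v /=.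
  by move=> <-; exists [::], [::], v; split => //; left.
move=> [Ee se h]; case: (pselect (in_essential_class v)) => hv.
  by exists [::], (e :: es), v; split => //=; right.
have [pre [suf [u [-> h1 h2 hn hs]]]] := IH _ h.
by exists (e :: pre), suf, u; split => //=; rewrite hn andbT se; apply/asboolP.
Qed.

Lemma essential_gpath L u w es : ess L -> L u -> gp u w es -> all (in_class L) es.
Proof.
move=> eL; elim: es u => [|e es IH] u //= Lu [Ee se h].
have Lt : L (etgt e) by apply: (eL u) => //; rewrite -se; apply: reach_edge.
by rewrite (IH _ Lt h) andbT; apply/asboolP; rewrite se.
Qed.

Lemma prod_loop_classes (l : seq (edge R)) (f : edge R -> R) : finite_set LC ->
  \big[*%R/1]_(L \in LC) \prod_(e <- l | in_class L e) f e =
  \prod_(e <- l | `[< internal e >]) f e.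
Proof.
move=> fin; elim: l => [|e l IH].
  by rewrite big_nil; apply: fsbig1 => L _; rewrite big_nil.
rewrite prod_cons_if -IH.
under eq_fsbigr => L _ do rewrite prod_cons_if.
rewrite fsbig_split //; congr (_ * _).
case: (pselect (internal e)) => [[L0 [LC0 s0 t0]] | ni].
  rewrite asboolT; last by exists L0.
  rewrite -(fsbig_widen [set L0] LC) => [|L -> //|L [LCL nL0] /=].
    by rewrite fsbig_set1 /in_class asboolT.
  by case: ifP => // /asboolP [s1 t1]; case: nL0; apply: loop_class_eq s1 s0.
rewrite asboolF //; apply: fsbig1 => L LCL; case: ifP => // /asboolP [s1 t1].
by case: ni; exists L.
Qed.

End LoopClasses.

Section PathMatrices.
Variables (R : realType) (I : finType) (S : I -> amap R) (p : I -> R)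
  (K : set R) (mu : probability R R) (ltm : rel (amap R))
  (Phi : nbset R -> seq (seq (seq I))).

Local Notation E := (Eset S K ltm Phi p mu).
Local Notation gp := (gpath S K ltm Phi p mu).

Lemma gpath_last v w e l : gp v w (e :: l) -> E (last e l) /\ etgt (last e l) = w.
Proof.
elim: l v e => [|e' l IH] v e /= [Ee se h]; last exact: IH h.
by split => //; move: h => /= ->.
Qed.

Lemma Tpath_cat v u pre suf : gp v u pre -> forall i k, (i < size v)%N ->
  Tpath (pre ++ suf) i k = \sum_(l < size u) Tpath pre i l * Tpath suf l k.
Proof.
elim: pre v => [|e pre IH] v /=.
  move=> <- i k ilt; rewrite (bigD1 (Ordinal ilt)) //= /mx1 eqxx mul1r big1 ?addr0 //.
  move=> l; rewrite eq_sym -val_eqE /= => /negbTE ->; exact: mul0r.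
move=> [Ee se h] i k _.
transitivity (\sum_(l < size (etgt e)) \sum_(m < size u)
   emat e i l * (Tpath pre l m * Tpath suf m k)).
  by apply: eq_bigr => l _; rewrite (IH _ h l k (ltn_ord l)) mulr_sumr.
rewrite exchange_big /=; apply: eq_bigr => m _.
by rewrite /mxm mulr_suml; apply: eq_bigr => l _; rewrite mulrA.
Qed.

Lemma pnorm_rowsums u w e l : gp u w (e :: l) ->
  pnorm (e :: l) = \sum_(i < size u) \sum_(j < size w) Tpath (e :: l) i j.
Proof. by move=> h; have [_ <-] := gpath_last h; case: h => _ <- _. Qed.

Definition scalar_edge (e : edge R) := (size (esrc e) == 1%N) && (size (etgt e) == 1%N).

Lemma Tpath_scalar l : all scalar_edge l -> Tpath l 0 0 = \prod_(e <- l) emat e 0 0.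
Proof.
elim: l => [|e l IH] /=; first by rewrite big_nil.
by move=> /andP[/andP[_ /eqP h1] al]; rewrite big_cons /mxm -IH // h1 big_ord1.
Qed.

Lemma pnorm_scalar l : all scalar_edge l -> pnorm l = \prod_(e <- l) emat e 0 0.
Proof.
case: l => [|e l]; first by rewrite big_nil.
move=> al; have /andP[_ /eqP hl] := all_last al.
move: (al) => /andP[/andP[/eqP h0 _] _].
by rewrite /pnorm /mxnorm h0 hl !big_ord1; exact: Tpath_scalar.
Qed.

Hypothesis Hnn : forall e, E e -> nonneg_mx (emat e).

Lemma Tpath_ge0 v w l : gp v w l -> nonneg_mx (Tpath l).
Proof.
elim: l v => [|e l IH] v /= => [_|[Ee _ h]]; first exact: mx1_ge0.
by apply: mxm_ge0; [exact: Hnn | exact: IH h].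
Qed.

Lemma pnorm_ge0 v w l : gp v w l -> 0 <= pnorm l.
Proof.
case: l => [|e l] h; first exact: ler01.
by apply: sumr_ge0 => i _; apply: sumr_ge0 => j _; exact: Tpath_ge0 h _ _.
Qed.

Local Notation internal_b e := (`[< internal S p K mu ltm Phi e >]).

Definition bridge_count (l : seq (edge R)) := count (fun e => ~~ internal_b e) l.
Definition internal_weight (l : seq (edge R)) := \prod_(e <- l | internal_b e) emat e 0 0.

Lemma internal_weight_ge0 v w l : gp v w l -> 0 <= internal_weight l.
Proof.
elim: l v => [|e l IH] v /= => [_|[Ee _ h]]; first by rewrite /internal_weight big_nil.
rewrite /internal_weight prod_cons_if mulr_ge0 //; last exact: IH h.
by case: ifP => _ //; exact: Hnn.
Qed.

Variables (N Mx d : R).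
Hypothesis HN : forall e, E e -> (size (etgt e))%:R <= N.
Hypothesis HMx : forall e, E e -> forall i j, (i < size (esrc e))%N ->
  (j < size (etgt e))%N -> emat e i j <= Mx.
Hypothesis Hd : forall e, E e -> forall j, (j < size (etgt e))%N ->
  d <= \sum_(i < size (esrc e)) emat e i j.
Hypothesis N0 : 0 <= N.
Hypothesis Mx0 : 0 <= Mx.
Hypothesis d0 : 0 <= d.

(* An internal edge is 1x1 and multiplies by its entry; any other edge
   multiplies entries by at most N * Mx and column sums by at least d. *)
Lemma Tpath_le v u l : gp v u l -> all (fun e => internal_b e ==> scalar_edge e) l ->
  forall i j, (i < size v)%N -> (j < size u)%N ->
  Tpath l i j <= (N * Mx) ^+ bridge_count l * internal_weight l.
Proof.
elim: l v => [|e l IH] v /=.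
  move=> <- _ i j _ _; rewrite /bridge_count /internal_weight big_nil expr0 mulr1.
  by rewrite /mx1; case: eqP; rewrite ?lexx ?ler01.
move=> [Ee se h] /andP[hone al] i j ilt jlt.
rewrite /bridge_count /= -/(bridge_count l).
rewrite /internal_weight prod_cons_if -/(internal_weight l).
case: ifP hone => /= [_ /andP[/eqP s1 /eqP t1]|_ _].
  move: ilt; rewrite -se s1 ltnS leqn0 => /eqP ->.
  by rewrite add0n /mxm t1 big_ord1 mulrCA ler_wpM2l ?(Hnn Ee) // (IH _ h) // t1.
rewrite add1n mul1r /mxm.
apply: (le_trans (y := \sum_(k < size (etgt e)) Mx * ((N * Mx) ^+ bridge_count l *
  internal_weight l))).
  apply: ler_sum => k _; apply: ler_pM; [exact: Hnn | exact: (Tpath_ge0 h) | |].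
    by apply: HMx => //; rewrite se.
  exact: (IH _ h).
rewrite sumr_const card_ord -mulr_natl exprS -!mulrA ler_wpM2r ?HN //.
by rewrite !mulr_ge0 ?exprn_ge0 ?mulr_ge0 ?(internal_weight_ge0 h).
Qed.

Lemma Tpath_colsum_ge v u l : gp v u l -> all (fun e => internal_b e ==> scalar_edge e) l ->
  forall j, (j < size u)%N ->
  d ^+ bridge_count l * internal_weight l <= \sum_(i < size v) Tpath l i j.
Proof.
elim: l v => [|e l IH] v /=.
  move=> <- _ j jlt; rewrite /bridge_count /internal_weight big_nil expr0 mulr1.
  rewrite (bigD1 (Ordinal jlt)) //= /mx1 eqxx lerDl.
  by apply: sumr_ge0 => i _; exact: ler0n.
move=> [Ee se h] /andP[hone al] j jlt.
rewrite /bridge_count /= -/(bridge_count l).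
rewrite /internal_weight prod_cons_if -/(internal_weight l).
case: ifP hone => /= [_ /andP[/eqP s1 /eqP t1]|_ _].
  rewrite add0n -se s1 big_ord1 /mxm t1 big_ord1 mulrCA ler_wpM2l ?(Hnn Ee) //.
  by have := IH _ h al j jlt; rewrite t1 big_ord1.
rewrite add1n mul1r /mxm exchange_big /=.
under eq_bigr do rewrite -mulr_suml.
apply: (le_trans (y := \sum_(k < size (etgt e)) d * Tpath l k j)); last first.
  by apply: ler_sum => k _; rewrite ler_wpM2r ?(Tpath_ge0 h) // -se Hd.
by rewrite -mulr_sumr exprS -mulrA ler_wpM2l // (IH _ h).
Qed.

End PathMatrices.

Section DecompositionConstant.
Variable R : realType.

Definition decomposition_constant (N Mx d : R) (n : nat) :=
  (d ^+ n)^-1 + N * (N * Mx) ^+ n.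

Lemma decomposition_constant_ge1 N Mx d n : 0 <= N -> 0 <= Mx -> 0 < d <= 1 ->
  1 <= decomposition_constant N Mx d n.
Proof.
move=> N0 Mx0 /andP[d0 d1]; rewrite /decomposition_constant.
have dn1 : 1 <= (d ^+ n)^-1.
  by rewrite invf_ge1; [exact: exprn_ile1 (ltW d0) d1 | exact: exprn_gt0].
by rewrite (le_trans dn1) // lerDl mulr_ge0 // exprn_ge0 // mulr_ge0.
Qed.

Lemma decomposition_constant_bounds N Mx d P Q ps pn (b n : nat) :
  1 <= N -> 1 <= Mx -> 0 < d <= 1 -> (b <= n)%N -> 0 <= P -> 0 <= ps ->
  ps <= Q <= N * ps -> d ^+ b * P * Q <= pn <= (N * Mx) ^+ b * P * Q ->
  (decomposition_constant N Mx d n)^-1 * (P * ps) <= pn /\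
  pn <= decomposition_constant N Mx d n * (P * ps).
Proof.
move=> N1 Mx1 /andP[d0 d1] bn P0 ps0 /andP[psQ QN] /andP[lo hi].
set C := decomposition_constant N Mx d n.
have NMx1 : 1 <= N * Mx by rewrite -[1]mulr1 ler_pM.
have NMxn0 : 0 <= N * (N * Mx) ^+ n by rewrite mulr_ge0 ?exprn_ge0 ?(le_trans ler01).
have dn0 : 0 < d ^+ n by rewrite exprn_gt0.
have C0 : 0 < C.
  apply: lt_le_trans ltr01 (decomposition_constant_ge1 n _ _ _); rewrite ?d0 //;
    exact: le_trans ler01 _.
have Cinv : C^-1 <= d ^+ b.
  apply: le_trans (ler_wiXn2l (ltW d0) d1 bn).
  by rewrite -[X in _ <= X]invrK lef_pV2 ?posrE ?invr_gt0 // lerDl.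
have Q0 : 0 <= Q := le_trans ps0 psQ.
split.
  apply: le_trans lo; rewrite mulrA; apply: ler_pM => //.
    by rewrite mulr_ge0 // invr_ge0 ltW.
  by rewrite ler_wpM2r.
apply: (le_trans hi); apply: (le_trans (y := N * (N * Mx) ^+ n * (P * ps))); last first.
  by rewrite ler_wpM2r ?mulr_ge0 // lerDr invr_ge0 ltW.
rewrite -mulrA (_ : N * _ * _ = (N * Mx) ^+ n * (P * (N * ps))); last by ring.
apply: ler_pM; rewrite ?mulr_ge0 ?ler_wpM2l ?ler_weXn2l //.
exact/exprn_ge0/(le_trans ler01).
Qed.

End DecompositionConstant.

Lemma uniform_edge_bounds (R : realType) (E : set (edge R)) : finite_set E ->
  (forall e, E e -> nonneg_mx (emat e)) ->
  (forall e, E e -> colsum_pos (size (esrc e)) (size (etgt e)) (emat e)) ->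
  exists N Mx d : R, [/\ 1 <= N, 1 <= Mx & 0 < d <= 1] /\
    [/\ forall e, E e -> (size (etgt e))%:R <= N,
        forall e, E e -> forall i j, (i < size (esrc e))%N ->
          (j < size (etgt e))%N -> emat e i j <= Mx &
        forall e, E e -> forall j, (j < size (etgt e))%N ->
          d <= \sum_(i < size (esrc e)) emat e i j].
Proof.
move=> fE Hnn Hcol.
have [M1 [M10 HM1]] := finite_set_ub (fun e => (size (etgt e))%:R : R) fE.
have [M2 [M20 HM2]] := finite_set_ub
  (fun e => mxnorm (size (esrc e)) (size (etgt e)) (emat e)) fE.
have [M3 [M30 HM3]] := finite_set_ub
  (fun e => \sum_(j < size (etgt e)) (\sum_(i < size (esrc e)) emat e i j)^-1) fE.
exists (M1 + 1), (M2 + 1), (M3 + 1)^-1; split.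
  by rewrite !lerDr M10 M20 invr_gt0 ltr_wpDl // invf_le1 ?ltr_wpDl // lerDr.
split=> e Ee.
- by rewrite (le_trans (HM1 _ Ee)) ?lerDl.
- move=> i j il jl.
  by rewrite (le_trans (ler_mxnorm_entry (Hnn _ Ee) il jl)) // (le_trans (HM2 _ Ee)) ?lerDl.
move=> j jl; rewrite -[X in _ <= X]invrK lef_pV2 ?posrE ?invr_gt0 ?ltr_wpDl ?Hcol //.
have sinv0 k : 0 <= (\sum_(i < size (esrc e)) emat e i k)^-1.
  by rewrite invr_ge0; apply: sumr_ge0 => i _; exact: Hnn.
apply: le_trans (ler_sum_entry (x := fun k => (\sum_(i < _) emat e i k)^-1) sinv0 jl) _.
by rewrite (le_trans (HM3 _ Ee)) ?lerDl.
Qed.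

Section Decomposition.
Variables (R : realType) (I : finType) (S : I -> amap R) (p : I -> R)
  (K : set R) (mu : probability R R) (ltm : rel (amap R))
  (Phi : nbset R -> seq (seq (seq I))).

Local Notation E := (Eset S K ltm Phi p mu).
Local Notation V := (Vset S K ltm Phi).
Local Notation gp := (gpath S K ltm Phi p mu).
Local Notation rch := (reach S K ltm Phi p mu).
Local Notation LC := (loop_class S K ltm Phi p mu).
Local Notation ess := (essential S K ltm Phi p mu).
Local Notation internal_b e := (`[< internal S p K mu ltm Phi e >]).
Local Notation in_essential_class := (in_essential_class S p K mu ltm Phi).
Local Notation bridge_sources es := [seq esrc e | e <- es & ~~ internal_b e].

Hypothesis EV : forall e, E e -> V (esrc e) /\ V (etgt e).

Lemma reach_bridge_source v w es x : gp v w es -> x \in bridge_sources es -> rch v x.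
Proof.
elim: es v => [//|e es IH] v /= [Ee se h].
have ve : rch v (etgt e) by rewrite -se; apply: reach_edge.
case: (~~ internal_b e) => /=; last by move=> hx; exact: reach_trans ve (IH _ h hx).
rewrite inE => /orP[/eqP ->|hx]; first by rewrite se; exact: reach_refl.
exact: reach_trans ve (IH _ h hx).
Qed.

(* A bridge cannot be revisited: returning to its source would close a cycle
   through it and make it internal. *)
Lemma bridge_sources_uniq v w es : gp v w es -> uniq (bridge_sources es).
Proof.
elim: es v => [//|e es IH] v /= [Ee se h].
case hi : (internal_b e) => /=; first exact: IH h.
rewrite (IH _ h) andbT; apply: contraFN hi => /(reach_bridge_source h) back.
exact/asboolP/internal_of_back_reach.
Qed.

Lemma bridge_sources_Vset v w es : V v -> gp v w es ->
  all (fun x => `[< V x >]) (bridge_sources es).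
Proof.
elim: es v => [//|e es IH] v /= Vv [Ee se h].
case: (~~ internal_b e) => /=; last exact: IH (EV Ee).2 h.
by rewrite (IH _ (EV Ee).2 h) andbT; apply/asboolP; rewrite se.
Qed.

Lemma bridge_count_le v w es s : V = [set` s] -> V v -> gp v w es ->
  (bridge_count S p K mu ltm Phi es <= size s)%N.
Proof.
move=> Vs Vv h; rewrite /bridge_count -size_filter -(size_map (@esrc R)).
apply: uniq_leq_size; first exact: bridge_sources_uniq h.
by move=> x /(allP (bridge_sources_Vset Vv h)) /asboolP; rewrite Vs.
Qed.

Hypothesis Hne : forall L, LC L -> ~ ess L -> forall v, L v -> size v = 1%N.

Lemma lam_scalar L l : LC L -> ~ ess L -> all (@scalar_edge R) (lam L l).
Proof.
move=> LCL nL; rewrite /lam; elim: l => [|e l IH] //=.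
case: ifP => [/asboolP [s1 t1]|_] //=.
by rewrite IH andbT /scalar_edge (Hne LCL nL s1) (Hne LCL nL t1).
Qed.

Lemma avoid_essential_scalar pre :
  all (fun e => `[< ~ in_essential_class (esrc e) >]) pre ->
  all (fun e => internal_b e ==> scalar_edge e) pre.
Proof.
apply: sub_all => e /asboolP ne; apply/implyP => /asboolP [L [LCL s1 t1]].
have nL : ~ ess L by move=> eL; apply: ne; exists L.
by rewrite /scalar_edge (Hne LCL nL s1) (Hne LCL nL t1).
Qed.

(* Only the essential class entered by [suf] sees edges of [suf]; the other
   loop classes see only 1x1 edges of [pre]. *)
Lemma prod_lam_split pre suf u w : finite_set LC -> gp u w suf ->
  all (fun e => `[< ~ in_essential_class (esrc e) >]) pre ->
  suf = [::] \/ in_essential_class u ->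
  \big[*%R/1]_(L \in LC) pnorm (lam L (pre ++ suf)) =
  internal_weight S p K mu ltm Phi pre * pnorm suf.
Proof.
move=> fin hsuf hpre hs.
have lam_suf L : LC L -> ~ (ess L /\ L u) -> lam L suf = [::].
  move=> LCL nL; case: hs => [->//|[L0 [LC0 e0 L0u]]].
  apply: lam_nil; apply: sub_all (essential_gpath e0 L0u hsuf) => e /asboolP [s0 _].
  apply/negP => /asboolP [s1 _]; apply: nL.
  by rewrite (loop_class_scc EV LCL s1) -(loop_class_scc EV LC0 s0).
have lam_pre L : LC L -> ess L -> lam L pre = [::].
  move=> LCL eL; apply: lam_nil; apply: sub_all hpre => e /asboolP ne.
  by apply/negP => /asboolP [s1 _]; apply: ne; exists L.
transitivity (\big[*%R/1]_(L \in LC)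
   ((\prod_(e <- pre | in_class L e) emat e 0 0) * pnorm (lam L suf))).
  apply: eq_fsbigr => L /[!inE] LCL; rewrite lam_cat.
  case: (pselect (ess L)) => eL.
    have lp := lam_pre L LCL eL; rewrite lp cat0s -big_filter.
    by move: lp; rewrite /lam /in_class => ->; rewrite big_nil mul1r.
  rewrite lam_suf ?cats0 ?mulr1 ?pnorm_scalar ?lam_scalar ?big_filter //.
  by case.
rewrite fsbig_split // prod_loop_classes //; congr (_ * _).
case: hs => [->|[L0 [LC0 e0 L0u]]]; first by apply: fsbig1.
rewrite -(fsbig_widen [set L0] LC) => [|L -> //|L [LCL nL] /=].
  by rewrite fsbig_set1 lam_id // (essential_gpath e0 L0u hsuf).
rewrite lam_suf // => -[_ Lu]; apply: nL.
by rewrite /= (loop_class_scc EV LCL Lu) -(loop_class_scc EV LC0 L0u).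
Qed.

Hypothesis Hnn : forall e, E e -> nonneg_mx (emat e).

Lemma pnorm_root_path pre suf u w e es : gp (root_nb R) u pre -> gp u w suf ->
  e :: es = pre ++ suf -> gp (root_nb R) w (e :: es) ->
  pnorm (e :: es) = \sum_(l < size u) Tpath pre 0 l * \sum_(j < size w) Tpath suf l j.
Proof.
move=> hpre hsuf ees h; rewrite (pnorm_rowsums h) big_ord1 ees.
under eq_bigr => j _ do rewrite (Tpath_cat suf hpre j (ltn0Sn 0)).
by rewrite exchange_big; apply: eq_bigr => l _; rewrite mulr_sumr.
Qed.

Variables (N Mx d : R).
Hypothesis N1 : 1 <= N.
Hypothesis Mx1 : 1 <= Mx.
Hypothesis d01 : 0 < d <= 1.
Hypothesis HN : forall e, E e -> (size (etgt e))%:R <= N.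
Hypothesis HMx : forall e, E e -> forall i j, (i < size (esrc e))%N ->
  (j < size (etgt e))%N -> emat e i j <= Mx.
Hypothesis Hd : forall e, E e -> forall j, (j < size (etgt e))%N ->
  d <= \sum_(i < size (esrc e)) emat e i j.
Hypothesis Htgt : forall e, E e -> (0 < size (etgt e))%N.

Lemma rowsums_bounds u w suf : gp u w suf ->
  (suf = [::] -> (0 < size u)%N /\ (size u)%:R <= N) ->
  pnorm suf <= \sum_(l < size u) \sum_(j < size w) Tpath suf l j <= N * pnorm suf.
Proof.
case: suf => [/= <- /(_ erefl) [u0 uN]|e suf h _].
  rewrite (eq_bigr (fun _ => 1)) => [|l _]; last first.
    rewrite (bigD1 l) //= /mx1 eqxx big1 ?addr0 // => j.
    by rewrite eq_sym -val_eqE /= => /negbTE ->.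
  by rewrite sumr_const card_ord mulr1 ler1n u0.
rewrite -(pnorm_rowsums h) lexx andTb ler_peMl //; exact: (pnorm_ge0 Hnn h).
Qed.

Variable s : seq (nbset R).
Hypothesis Vs : V = [set` s].
Hypothesis fLC : finite_set LC.

Lemma pnorm_root_path_bounds w es : gp (root_nb R) w es ->
  (decomposition_constant N Mx d (size s))^-1 *
    \big[*%R/1]_(L \in LC) pnorm (lam L es) <= pnorm es /\
  pnorm es <= decomposition_constant N Mx d (size s) *
    \big[*%R/1]_(L \in LC) pnorm (lam L es).
Proof.
have N0 := le_trans ler01 N1; have Mx0 := le_trans ler01 Mx1.
have /andP[d0 _] := d01.
have C1 := decomposition_constant_ge1 (size s) N0 Mx0 d01.
case: es => [|e es] h.
  rewrite fsbig1 // !mulr1; split=> //; rewrite invf_le1 //; exact: lt_le_trans C1.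
have [pre [suf [u [ees hpre hsuf hn hsu]]]] := gpath_split_essential h.
have sc := avoid_essential_scalar hn.
have Ha := Tpath_le Hnn HN HMx N0 Mx0 hpre sc.
have Hb := Tpath_colsum_ge Hnn Hd (ltW d0) hpre sc.
rewrite ees (prod_lam_split fLC hsuf hn hsu) -ees.
apply: (decomposition_constant_bounds (b := bridge_count S p K mu ltm Phi pre)
  (Q := \sum_(l < size u) \sum_(j < size w) Tpath suf l j)) => //.
- exact: (bridge_count_le Vs (Vset_root S K ltm Phi) hpre).
- exact: (internal_weight_ge0 Hnn hpre).
- exact: (pnorm_ge0 Hnn hsuf).
- apply: (rowsums_bounds hsuf) => suf0; have [El tw] := gpath_last h.
  by move: hsuf; rewrite suf0 /= => ->; rewrite -tw Htgt ?HN.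
have r0 l : 0 <= \sum_(j < size w) Tpath suf l j.
  by apply: sumr_ge0 => j _; exact: (Tpath_ge0 Hnn hsuf).
rewrite (pnorm_root_path hpre hsuf ees h) !mulr_sumr; apply/andP; split.
  by apply: ler_sum => l _; rewrite ler_wpM2r //; have := Hb l (ltn_ord l); rewrite big_ord1.
by apply: ler_sum => l _; rewrite ler_wpM2r ?Ha.
Qed.

Lemma decomposable_of_edge_bounds : decomposable S K ltm Phi p mu.
Proof.
exists (decomposition_constant N Mx d (size s)); split; last exact: pnorm_root_path_bounds.
by apply: decomposition_constant_ge1; rewrite ?(le_trans ler01).
Qed.

End Decomposition.

Unset Implicit Arguments.

Theorem lemma4p10 (R : realType) (I : finType) (S : I -> amap R) (p : I -> R)
  (K : set R) (mu : probability R R) (ltm : rel (amap R))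
  (Phi : nbset R -> seq (seq (seq I))) :
  is_wifs S p ->
  is_ss_set S K ->
  is_ss_measure S p mu ->
  (~ exists x : R, K = [set x]) ->
  convex_hull K = [set x | 0 <= x <= 1] ->
  strict_total_order ltm ->
  iteration_rule S K ltm Phi ->
  FNC S K ltm Phi p mu ->
  (forall L, loop_class S K ltm Phi p mu L -> ~ essential S K ltm Phi p mu L ->
     forall v, L v -> size v = 1%N) ->
  decomposable S K ltm Phi p mu.
Proof.
move=> Hw Hss Hm Hns Hch Hlt Hir [fV fE] Hne.
pose E := Eset S K ltm Phi p mu; pose V := Vset S K ltm Phi.
have Eprops := Eset_props Hw Hss Hm Hns Hch Hlt Hir.
have Hnn e : E e -> nonneg_mx (emat e) by case/Eprops.
have Hcol e : E e -> colsum_pos (size (esrc e)) (size (etgt e)) (emat e) by case/Eprops.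
have Htgt e : E e -> (0 < size (etgt e))%N by case/Eprops.
have EV e : E e -> V (esrc e) /\ V (etgt e) by case/Eprops.
have [N [Mx [d [[N1 Mx1 d01] [HN HMx Hd]]]]] := uniform_edge_bounds fE Hnn Hcol.
have [s Vs] := iffLR (finite_seqP _) fV.
exact: (decomposable_of_edge_bounds EV Hne Hnn N1 Mx1 d01 HN HMx Hd Htgt Vs
  (finite_loop_classes EV fV)).
Qed.
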